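(* Let $\mathsf{T}$ be a rooted plane tree, let $\delta\in\mathcal{O}(\mathsf{T})$, and suppose $v$ wraps $u$ in $\delta$. Then the map $\delta_u^v\colon\mathsf{T}\to 2^{\mathsf{T}}$ defined by $\delta_u^v(v)=\delta(v)\setminus\Delta_{\delta(v)}(u)$ and $\delta_u^v(w)=\delta(w)$ for $w\neq v$ is an ornamentation of $\mathsf{T}$.
   Context: A rooted plane tree $\mathsf{T}$ is a finite tree with a distinguished root, regarded as a poset $\leq_\mathsf{T}$ in which $v'\leq_\mathsf{T} v$ iff $v$ lies on the path from $v'$ to the root. An ornament is a nonempty set of nodes inducing a connected subgraph. For a set $S$ of nodes and $u\in S$, $\Delta_S(u)=\{w\in S:w\leq_\mathsf{T} u\}$. An ornamentation is a map $\delta$ from $\mathsf{T}$ to ornaments such that the unique maximal element of $\delta(v)$ is $v$ and any two sets $\delta(v),\delta(v')$ are nested or disjoint; $\mathcal{O}(\mathsf{T})$ is the set of ornamentations. For distinct nodes $u,v$, we say $v$ wraps $u$ in $\delta$ if $\delta(u)\subseteq\delta(v)$ and there is no node $w$ with $\delta(u)\subsetneq\delta(w)\subsetneq\delta(v)$. *)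

From mathcomp Require Import all_boot.
Set Implicit Arguments. Unset Strict Implicit. Unset Printing Implicit Defensive.

Section Tree.
Variables (T : finType) (r : T) (par : T -> T).

(* child -> parent edge; the root has no parent *)
Definition up_edge : rel T := fun a b => (a != r) && (par a == b).

Definition rooted_tree : Prop := forall x : T, connect up_edge x r.

Definition tle (x y : T) : bool := connect up_edge x y.
Definition tlt (x y : T) : bool := (x != y) && tle x y.

Definition adj : rel T := fun a b => up_edge a b || up_edge b a.

Definition induced_connected (S : {set T}) : Prop :=
  forall x y, x \in S -> y \in S ->
    connect (fun a b => [&& a \in S, b \in S & adj a b]) x y.

Definition ornament (S : {set T}) : Prop := S != set0 /\ induced_connected S.

Definition maximal_in (S : {set T}) (x : T) : bool :=
  (x \in S) && [forall y, (y \in S) ==> ~~ tlt x y].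

Definition Delta (S : {set T}) (u : T) : {set T} := [set w in S | tle w u].

Definition ornamentation (delta : T -> {set T}) : Prop :=
  (forall v, ornament (delta v)) /\
  (forall v, maximal_in (delta v) v /\
             forall x, maximal_in (delta v) x -> x = v) /\
  (forall v v', [|| delta v \subset delta v', delta v' \subset delta v
                  | [disjoint delta v & delta v']]).

Definition wraps (delta : T -> {set T}) (v u : T) : Prop :=
  u != v /\ delta u \subset delta v /\
  ~ (exists w, (delta u \proper delta w) && (delta w \proper delta v)).

Definition delta_uv (delta : T -> {set T}) (u v : T) : T -> {set T} :=
  fun w => if w == v then delta v :\: Delta (delta v) u else delta w.

End Tree.

From mathcomp Require Import all_boot.
Set Implicit Arguments. Unset Strict Implicit. Unset Printing Implicit Defensive.

(* Put D = delta(v) and D' = D \ Delta_D(u).  As u lies in delta(u), which is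
   contained in D whose top is v, v is not below u, so v stays in D'.  A set
   with top v is connected as soon as every node of it other than v has its
   parent in it; removing the down-set Delta_D(u) preserves this, so D' is an
   ornament with top v.  Laminarity only needs checking for D' against a
   delta(w) contained in D.  If w <= u, then delta(w) lies inside Delta_D(u).
   Otherwise delta(w) is not inside delta(u); since v wraps u it is either D
   itself or disjoint from delta(u), and in the latter case it misses
   Delta_D(u): an ornament holding a node below u, but whose top is not below
   u, contains u. *)

Lemma connect_forward (T : finType) (e : rel T) (a : pred T) x y :
  (forall b c, e b c -> a b -> a c) -> connect e x y -> a x -> a y.
Proof.
move=> a_e /connectP [p e_p ->].
by elim: p x e_p => //= b p IHp x /andP [e_xb e_p] /(a_e x b e_xb); apply: IHp.
Qed.

Section RootedTree.
Variables (T : finType) (r : T) (par : T -> T).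
Local Notation "x <=_T y" := (tle r par x y) (at level 70, no associativity).

Definition parent (x : T) : T := if x == r then r else par x.

Lemma tle_fconnect x y : (x <=_T y) = fconnect parent x y.
Proof.
apply/idP/idP; apply: connect_sub => a b.
  by case/andP=> /negbTE a_r /eqP <-; apply: connect1; rewrite /= /parent a_r.
rewrite /= /parent; case: (eqVneq a r) => [-> /eqP <-|a_r /eqP <-].
  exact: connect0.
by apply: connect1; rewrite /up_edge a_r eqxx.
Qed.

Lemma tle_refl x : x <=_T x.
Proof. exact: connect0. Qed.

Lemma tle_trans y x z : x <=_T y -> y <=_T z -> x <=_T z.
Proof. exact: connect_trans. Qed.

Lemma tle_par x : x != r -> x <=_T par x.
Proof. by move=> x_r; apply: connect1; rewrite /up_edge x_r eqxx. Qed.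

Lemma tle_eqVpar x y : x <=_T y -> x = y \/ x != r /\ par x <=_T y.
Proof.
case/connectP=> [[|b p]] /=; first by left.
case/andP=> /andP [x_r /eqP <-] p_up y_last; right; split=> //.
by apply/connectP; exists p.
Qed.

Lemma tle_iter n x : x <=_T iter n parent x.
Proof. by rewrite tle_fconnect fconnect_iter. Qed.

Lemma tle_exists_iter x y : x <=_T y -> exists n, iter n parent x = y.
Proof. by rewrite tle_fconnect => /iter_findex; exists (findex parent x y). Qed.

Lemma tle_total x y z : x <=_T y -> x <=_T z -> (y <=_T z) || (z <=_T y).
Proof.
move=> /tle_exists_iter [m <-] /tle_exists_iter [n <-].
case: (leqP m n) => [m_n|n_m]; first by rewrite -(subnK m_n) iterD tle_iter.
by rewrite -(subnK (ltnW n_m)) iterD tle_iter orbT.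
Qed.

Lemma maximal_in_subset (A S : {set T}) w :
  A \subset S -> w \in A -> maximal_in r par S w -> maximal_in r par A w.
Proof.
move=> A_S wA /andP [_ /forallP S_max]; rewrite /maximal_in wA.
by apply/forallP=> y; apply/implyP=> /(subsetP A_S) yS; apply: (implyP (S_max y)).
Qed.

Lemma maximal_tle_eq (S : {set T}) w y :
  maximal_in r par S w -> y \in S -> w <=_T y -> y = w.
Proof.
case/andP=> _ /forallP /(_ y) S_max yS w_y.
by move: S_max; rewrite yS /tlt w_y andbT negbK => /eqP.
Qed.

Hypothesis rooted : rooted_tree r par.

Lemma tle_anti x y : x <=_T y -> y <=_T x -> x = y.
Proof.
move=> /tle_exists_iter [m x_y] /tle_exists_iter [n y_x].
have [N x_root] := tle_exists_iter (rooted x).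
have iter_root k : iter k parent r = r by apply: iter_fix; rewrite /parent eqxx.
case: (posnP (n + m)) => [/eqP | nm_gt0].
  by rewrite addn_eq0 => /andP [_ /eqP m0]; rewrite -x_y m0.
have cycle k : iter ((n + m) * k) parent x = x.
  by elim: k => [|k IHk]; rewrite ?muln0 // mulnS iterD IHk iterD x_y y_x.
(* iterating the cycle through x long enough reaches the fixed point r *)
have x_r : x = r.
  by rewrite -(cycle N) -(subnK (leq_pmull N nm_gt0)) iterD x_root iter_root.
by rewrite -x_y x_r iter_root.
Qed.

Lemma in_setD_Delta (S : {set T}) u x :
  (x \in S :\: Delta r par S u) = (x \in S) && ~~ (x <=_T u).
Proof. by rewrite !inE; case: (x \in S) => //=; rewrite andbT. Qed.

Lemma parent_closed_connected (S : {set T}) w :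
  w \in S -> {in S, forall x, x <=_T w} ->
  {in S, forall x, x != w -> x != r /\ par x \in S} ->
  induced_connected r par S.
Proof.
move=> wS S_le_w S_par.
set e := fun a b => [&& a \in S, b \in S & adj r par a b].
have e_sym : connect_sym e.
  by apply: sym_connect_sym => a b; rewrite /e /adj andbCA orbC.
suff to_w x : x \in S -> connect e x w.
  by move=> x y xS yS; rewrite (connect_trans (to_w x xS)) // e_sym to_w.
move=> xS; have /connectP [p up_p w_last] := S_le_w x xS.
elim: p x xS up_p w_last => [|b p IHp] x xS /=; first by move=> _ ->; apply: connect0.
case/andP=> /andP [_ /eqP <-] up_p w_last.
have [-> | x_w] := eqVneq x w; first exact: connect0.
have [x_r par_xS] := S_par x xS x_w.
apply: (connect_trans _ (IHp _ par_xS up_p w_last)); apply: connect1.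
by rewrite /e xS par_xS /adj /up_edge x_r eqxx.
Qed.

Section Ornament.
Variables (S : {set T}) (w : T).
Hypotheses (S_conn : induced_connected r par S) (S_max : maximal_in r par S w).

Lemma maximal_mem : w \in S.
Proof. by case/andP: S_max. Qed.

Lemma tle_maximal x : x \in S -> x <=_T w.
Proof.
move=> xS.
have w_conn_x := S_conn maximal_mem xS.
apply: (connect_forward (a := fun z => z <=_T w) _ w_conn_x (tle_refl w)).
move=> a b /and3P [_ bS /orP [/andP [a_r /eqP b_eq] | /andP [b_r /eqP <-]]] a_w.
  rewrite -b_eq in bS *; case: (tle_eqVpar a_w) => [a_eq_w | [] //].
  rewrite a_eq_w in a_r bS *.
  by rewrite (maximal_tle_eq S_max bS (tle_par a_r)) tle_refl.
exact: tle_trans (tle_par b_r) a_w.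
Qed.

Lemma maximal_unique x : maximal_in r par S x -> x = w.
Proof.
case/andP=> xS /forallP /(_ w) /implyP /(_ maximal_mem).
by rewrite /tlt tle_maximal // andbT negbK => /eqP.
Qed.

Lemma par_mem x : x \in S -> x != w -> x != r /\ par x \in S.
Proof.
move=> xS x_w.
have x_r : x != r.
  by case: (tle_eqVpar (tle_maximal xS)) => [/eqP | [] //]; rewrite (negbTE x_w).
split=> //; apply: contraNT x_w => par_xS.
have w_le_x : w <=_T x.
  have x_conn_w := S_conn xS maximal_mem.
  apply: (connect_forward (a := fun z => z <=_T x) _ x_conn_w (tle_refl x)).
  move=> a b /and3P [_ bS /orP [/andP [_ /eqP b_eq] | /andP [b_r /eqP <-]]] a_x.
    rewrite -b_eq in bS *; case: (tle_eqVpar a_x) => [a_eq_x | [] //].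
    by move: bS; rewrite a_eq_x (negbTE par_xS).
  exact: tle_trans (tle_par b_r) a_x.
by rewrite (tle_anti w_le_x (tle_maximal xS)).
Qed.

Lemma mem_between x y : x \in S -> x <=_T y -> y <=_T w -> y \in S.
Proof.
move=> xS x_y y_w.
suff: (y \in S) || ~~ (y <=_T w) by rewrite y_w orbF.
have x_inv : (x \in S) || ~~ (x <=_T w) by rewrite xS.
apply: (connect_forward (a := fun z => (z \in S) || ~~ (z <=_T w)) _ x_y x_inv).
move=> a _ /andP [a_r /eqP <-] /orP [aS | a_w]; last first.
  by rewrite (contraNN (tle_trans (tle_par a_r)) a_w) orbT.
have [a_eq_w | a_w] := eqVneq a w; last by rewrite (par_mem aS a_w).2.
case: (boolP (par a <=_T w)) => [par_a_w | _]; last by rewrite orbT.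
rewrite a_eq_w in a_r par_a_w *.
by rewrite (tle_anti par_a_w (tle_par a_r)) maximal_mem.
Qed.

Lemma ornament_setD_Delta u :
  ~~ (w <=_T u) -> ornament r par (S :\: Delta r par S u).
Proof.
move=> w_u; have wD : w \in S :\: Delta r par S u by rewrite in_setD_Delta maximal_mem.
split; first by apply/set0Pn; exists w.
apply: (parent_closed_connected wD) => x; rewrite in_setD_Delta => /andP [xS x_u].
  exact: tle_maximal.
move=> x_w; have [x_r par_xS] := par_mem xS x_w.
by rewrite in_setD_Delta par_xS (contraNN (tle_trans (tle_par x_r)) x_u).
Qed.

Lemma maximal_setD_Delta u :
  ~~ (w <=_T u) -> maximal_in r par (S :\: Delta r par S u) w.
Proof.
move=> w_u; apply: (maximal_in_subset (subsetDl _ _) _ S_max).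
by rewrite in_setD_Delta maximal_mem.
Qed.

Lemma subset_setD_Delta (D : {set T}) u :
  S \subset D -> u \notin S -> ~~ (w <=_T u) -> S \subset D :\: Delta r par D u.
Proof.
move=> S_D uS w_u; apply/subsetP=> x xS; rewrite in_setD_Delta (subsetP S_D x xS) /=.
apply: contra uS => x_u; case/orP: (tle_total x_u (tle_maximal xS)) => [u_w | w_u'].
  exact: mem_between xS x_u u_w.
by rewrite w_u' in w_u.
Qed.

Lemma disjoint_setD_Delta (D : {set T}) u :
  w <=_T u -> [disjoint D :\: Delta r par D u & S].
Proof.
move=> w_u; rewrite disjoint_sym disjoint_subset; apply/subsetP=> x xS.
by rewrite inE in_setD_Delta (tle_trans (tle_maximal xS) w_u) andbF.
Qed.

End Ornament.

Section Wraps.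
Variables (delta : T -> {set T}) (u v : T).
Hypotheses (delta_orn : forall w, ornament r par (delta w))
  (delta_max : forall w, maximal_in r par (delta w) w)
  (delta_laminar : forall w w',
    [|| delta w \subset delta w', delta w' \subset delta w
      | [disjoint delta w & delta w']])
  (v_wraps_u : wraps delta v u).
Local Notation D' := (delta v :\: Delta r par (delta v) u).

Lemma wraps_not_tle : ~~ (v <=_T u).
Proof.
case: v_wraps_u => u_v [u_sub_v _]; apply: contra u_v => v_u.
have u_in_v := subsetP u_sub_v u (maximal_mem (delta_max u)).
by rewrite (maximal_tle_eq (delta_max v) u_in_v v_u).
Qed.

Lemma laminar_setD_Delta w : w != v ->
  [|| D' \subset delta w, delta w \subset D' | [disjoint D' & delta w]].
Proof.
move=> w_v; have [_ [u_sub_v no_between]] := v_wraps_u.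
have u_in_u := maximal_mem (delta_max u).
have tle_u : forall x, x \in delta u -> x <=_T u :=
  tle_maximal (delta_orn u).2 (delta_max u).
case/or3P: (delta_laminar v w) => [v_sub_w | w_sub_v | v_dis_w].
- by rewrite (subset_trans (subsetDl _ _) v_sub_w).
- have [w_u | w_nu] := boolP (w <=_T u).
    by rewrite (disjoint_setD_Delta (delta_orn w).2 (delta_max w)) ?orbT.
  case/or3P: (delta_laminar w u) => [w_sub_u | u_sub_w | w_dis_u].
  + by case/negP: w_nu; apply/tle_u/(subsetP w_sub_u)/(maximal_mem (delta_max w)).
  + have [-> | w_neq_v] := eqVneq (delta w) (delta v); first by rewrite subsetDl.
    case: no_between; exists w; rewrite !properEneq u_sub_w w_sub_v w_neq_v !andbT /=.
    apply: contraNneq w_nu => u_eq_w; apply: tle_u.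
    by rewrite u_eq_w (maximal_mem (delta_max w)).
  + rewrite (subset_setD_Delta (delta_orn w).2 (delta_max w)) ?orbT //.
    by rewrite (disjointFl w_dis_u u_in_u).
- by rewrite (disjointWl (subsetDl _ _) v_dis_w) !orbT.
Qed.

End Wraps.

End RootedTree.

Theorem lemma2p2 (T : finType) (r : T) (par : T -> T)
  (delta : T -> {set T}) (u v : T) :
  rooted_tree r par ->
  ornamentation r par delta ->
  wraps delta v u ->
  ornamentation r par (delta_uv r par delta u v).
Proof.
move=> rooted [orn [top lam]] v_wraps_u.
have top_max w := (top w).1.
have v_u := wraps_not_tle top_max v_wraps_u.
have D'_orn := ornament_setD_Delta rooted (orn v).2 (top_max v) v_u.
have D'_max := maximal_setD_Delta (top_max v) v_u.
have lam_v := laminar_setD_Delta rooted orn top_max lam v_wraps_u.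
rewrite /ornamentation /delta_uv; split; [|split] => w.
- by case: (eqVneq w v).
- case: (eqVneq w v) => [-> | _]; last exact: top.
  by split=> // x /(maximal_unique D'_orn.2 D'_max).
- move=> w'; case: (eqVneq w v) => [_ | w_v]; case: (eqVneq w' v) => [_ | w'_v].
  + by rewrite subxx.
  + exact: lam_v.
  + by rewrite disjoint_sym orbCA; apply: lam_v.
  + exact: lam.
Qed.
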